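(* Let $G$ be a finite, simple, connected graph and let $k\geq 3$ be an integer. Then $$\gamma_{B_k}(G)=\min\{\gamma_{B_k}(T)\colon T \text{ is a spanning tree of } G\}.$$
   Context: $d(u,v)$ denotes the distance in the graph. For a connected graph $G$ and an integer $k\ge 1$, a function $f\colon V(G)\to\{0,1,\dots,k\}$ is a dominating $k$-broadcast on $G$ if for every $u\in V(G)$ there is a vertex $v$ with $f(v)\geq 1$ and $d(u,v)\leq f(v)$. Its cost is $\omega(f)=\sum_{u\in V(G)}f(u)$, and the dominating $k$-broadcast number $\gamma_{B_k}(G)$ is the minimum cost of a dominating $k$-broadcast on $G$. *)

From mathcomp Require Import all_boot.
From mathcomp Require Import boolp.
Set Implicit Arguments. Unset Strict Implicit. Unset Printing Implicit Defensive.

Section Graphs.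
Variable V : finType.

Definition simple_graph (e : rel V) : Prop :=
  symmetric e /\ irreflexive e.

Definition connected (e : rel V) : Prop := forall u v : V, connect e u v.

(* a cycle: distinct vertices x :: p (at least 3 of them) forming a closed walk *)
Definition acyclic (e : rel V) : Prop :=
  ~ exists (x : V) (p : seq V),
      [/\ 2 <= size p, uniq (x :: p), path e x p & e (last x p) x].

Definition is_tree (e : rel V) : Prop :=
  simple_graph e /\ connected e /\ acyclic e.

Definition spanning_tree (e t : rel V) : Prop :=
  is_tree t /\ subrel t e.

(* within e u v n  <->  d(u,v) <= n : there is a walk from u to v with at most n edges *)
Definition within (e : rel V) (u v : V) (n : nat) : Prop :=
  exists p : seq V, [/\ path e u p, last u p = v & size p <= n].

Definition dom_broadcast (e : rel V) (k : nat) (f : {ffun V -> 'I_k.+1}) : Prop :=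
  forall u : V, exists v : V, 1 <= f v /\ within e u v (f v).

Definition cost (k : nat) (f : {ffun V -> 'I_k.+1}) : nat := \sum_(u : V) (f u : nat).

(* The default
   #|V| * k is an upper bound for every cost, so whenever a dominating
   k-broadcast exists (e.g. for connected graphs) this is the true minimum. *)
Definition gammaB (e : rel V) (k : nat) : nat :=
  \big[minn/#|V| * k]_(f : {ffun V -> 'I_k.+1} | `[< dom_broadcast e f >]) cost f.
End Graphs.

From mathcomp Require Import all_boot order boolp zify.
Set Implicit Arguments. Unset Strict Implicit. Unset Printing Implicit Defensive.

(* A broadcast dominating a spanning tree dominates the graph, so only
   gamma(T) <= gamma(G) for some spanning tree T needs an argument.  Fix an
   optimal dominating broadcast f of G.  For a connected spanning subgraph H,
   let the surplus s(u) be the largest f(v) - d_H(u, v) over broadcasting v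
   whose range contains u.  Joining each vertex to a neighbour of strictly
   larger surplus, when there is one, gives a forest along which every vertex
   climbs to a broadcasting vertex that still covers it: at a vertex whose
   neighbours have no larger surplus, the surplus is realised by the vertex
   itself.  On a cycle of H, the vertex of least surplus has at most one
   forest edge among its two cycle edges, so the other one can be deleted,
   keeping H connected and f dominating.  Deleting edges until no cycle is
   left yields a spanning tree on which f still dominates. *)

Section Graphs.
Variable V : finType.
Implicit Types (e t F : rel V) (u v w y z : V).

Lemma within_sub e1 e2 u v n : subrel e1 e2 -> within e1 u v n -> within e2 u v n.
Proof. by move=> e12 [p [ep pv p_le]]; exists p; split=> //; apply: sub_path ep. Qed.

Lemma within_leq e u v m n : m <= n -> within e u v m -> within e u v n.
Proof. by move=> mn [p [ep pv p_le]]; exists p; split=> //; apply: leq_trans mn. Qed.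

Lemma dom_broadcast_sub e1 e2 k (f : {ffun V -> 'I_k.+1}) :
  subrel e1 e2 -> dom_broadcast e1 f -> dom_broadcast e2 f.
Proof.
by move=> e12 dom u; have [v [fv uv]] := dom u; exists v; split; last exact: within_sub uv.
Qed.

Definition del_edge t y z : rel V :=
  fun u w => t u w && ~~ (((u == y) && (w == z)) || ((u == z) && (w == y))).

Definition arc_set t : {set V * V} := [set p | t p.1 p.2].

Lemma del_edge_sub t y z : subrel (del_edge t y z) t.
Proof. by move=> u w /andP[]. Qed.

Lemma del_edge_sym t y z : symmetric t -> symmetric (del_edge t y z).
Proof.
move=> tsym u w; rewrite /del_edge tsym; congr (_ && ~~ _).
by rewrite orbC [X in X || _]andbC [X in _ || X]andbC.
Qed.

Lemma del_edge_other t y z w : t y w -> w != z -> del_edge t y z y w.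
Proof.
move=> tyw wz; rewrite /del_edge tyw eqxx (negbTE wz) /=.
by apply/negP => /andP[/eqP-> /eqP wy]; rewrite wy eqxx in wz.
Qed.

Lemma subrel_del_edge F t y z :
  subrel F t -> ~~ F y z -> ~~ F z y -> subrel F (del_edge t y z).
Proof.
move=> Ft Fyz Fzy u w Fuw; rewrite /del_edge Ft //=.
by apply/negP => /orP[] /andP[/eqP eu /eqP ew]; subst u w; rewrite Fuw in Fyz Fzy.
Qed.

Lemma card_del_edge t y z : t y z -> #|arc_set (del_edge t y z)| < #|arc_set t|.
Proof.
move=> tyz; apply: proper_card; apply/properP; split.
  by apply/subsetP => p; rewrite !inE => /del_edge_sub.
by exists (y, z); rewrite !inE //= /del_edge tyz !eqxx.
Qed.

Lemma connected_del_edge t y z :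
  symmetric t -> connected t -> connect (del_edge t y z) y z ->
  connected (del_edge t y z).
Proof.
move=> tsym tconn yz u v; apply: connect_sub (tconn u v) => a b tab.
case dab: (del_edge t y z a b); first exact: connect1.
move: dab; rewrite /del_edge tab /= => /negbFE /orP[] /andP[/eqP-> /eqP->] //.
by rewrite (sym_connect_sym (del_edge_sym y z tsym)).
Qed.

Lemma path_del_edge t y z a q :
  y \notin a :: q -> path t a q -> path (del_edge t y z) a q.
Proof.
move=> yNaq; apply: (@sub_in_path _ (predC1 y)).
  by move=> u w /= uy wy tuw; rewrite /del_edge tuw (negbTE uy) (negbTE wy) andbF.
by apply/allP => u /=; apply: contraTneq => ->.
Qed.

Lemma cycle_detour t y q :
  cycle t (y :: q) -> uniq (y :: q) -> 2 <= size q ->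
  exists a q', [/\ q = a :: q', t y a, t (last a q') y, a != last a q' & path t a q'].
Proof.
case: q => [|a [|c q']] //= cyc /and3P[_ aNq _] _.
move: cyc; rewrite rcons_path /= => /and3P[tya tac /andP[tq' tlast]].
exists a, (c :: q'); split=> //=; last by rewrite tac.
by apply: contraNneq aNq => ->; exact: mem_last.
Qed.

Lemma exists_cycle_edge_outside t F (s : V -> nat) (p : V -> V) :
  symmetric t -> (forall y a, F y a -> s y <= s a -> a = p y) ->
  ~ acyclic t -> exists y z, [/\ t y z, ~~ F y z & connect (del_edge t y z) y z].
Proof.
move=> tsym Fup /contrapT [x [c [c_ge2 uc tc tlast]]].
have [y yc ymin] : exists2 y, y \in x :: c & forall z, z \in x :: c -> s y <= s z.
  by case: (arg_minnP s (mem_head x c)) => y; exists y.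
case/rot_to: yc => i q rq.
have cq : cycle t (y :: q) by rewrite -rq rot_cycle /= rcons_path tc tlast.
have uq : uniq (y :: q) by rewrite -rq rot_uniq.
have q_ge2 : 2 <= size q by move: (size_rot i (x :: c)); rewrite rq /= => -[->].
have qmin z : z \in q -> s y <= s z.
  by move=> zq; apply: ymin; rewrite -(mem_rot i) rq inE zq orbT.
have [a [q' [qE tya tby ab tq']]] := cycle_detour cq uq q_ge2.
set b := last a q' in tby ab; subst q.
have detour z : connect (del_edge t y z) a b.
  apply/connectP; exists q' => //; apply: path_del_edge tq'.
  by case/andP: uq.
have [Fya | Fya] := boolP (F y a).
- exists y, b; split; first by rewrite tsym.
  + apply: contra ab => Fyb; apply/eqP.
    have sya : s y <= s a by apply: qmin; exact: mem_head.
    have syb : s y <= s b by apply: qmin; exact: mem_last.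
    by rewrite (Fup y a Fya sya) (Fup y b Fyb syb).
  + by apply: connect_trans (connect1 _) (detour b); exact: del_edge_other.
- exists y, a; split=> //; rewrite (sym_connect_sym (del_edge_sym y a tsym)).
  apply: connect_trans (detour a) (connect1 _).
  by rewrite del_edge_sym //; apply: del_edge_other; rewrite 1?tsym // eq_sym.
Qed.

Lemma spanning_tree_by_deletion e (P : rel V -> Prop) :
  simple_graph e -> connected e -> P e ->
  (forall t, symmetric t -> subrel t e -> connected t -> P t -> ~ acyclic t ->
     exists y z, [/\ t y z, connect (del_edge t y z) y z & P (del_edge t y z)]) ->
  exists T, spanning_tree e T /\ P T.
Proof.
move=> [esym eirr] econn Pe shrink.
suff grow t : subrel t e -> symmetric t -> connected t -> P t ->
    exists T, spanning_tree e T /\ P T by apply: (grow e).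
have [n] := ubnP #|arc_set t|; elim: n t => // n IH t /ltnSE t_le te tsym tconn Pt.
have [tac | tcyc] := EM (acyclic t).
  exists t; split=> //; split=> //; split=> //; split=> // u.
  by apply/negP => /te; rewrite eirr.
have [y [z [tyz yz Pyz]]] := shrink t tsym te tconn Pt tcyc.
apply: (IH (del_edge t y z)) => //.
- exact: leq_trans (card_del_edge tyz) t_le.
- by move=> u w /del_edge_sub /te.
- exact: del_edge_sym.
- exact: connected_del_edge.
Qed.

End Graphs.

Section SurplusForest.
Variables (V : finType) (k : nat) (t : rel V) (f : {ffun V -> 'I_k.+1}).
Hypotheses (tsym : symmetric t) (fdom : dom_broadcast t f).
Implicit Types (u v w y : V) (x : V * 'I_k.+1).

Definition in_range u x : bool :=
  `[< [/\ 0 < f x.1, x.2 <= f x.1 & within t u x.1 x.2] >].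

Definition surplus u : nat := \max_(x | in_range u x) (f x.1 - x.2).

Lemma surplus_ge u x : in_range u x -> f x.1 - x.2 <= surplus u.
Proof. exact: leq_bigmax_cond. Qed.

Lemma surplus_le u : surplus u <= k.
Proof. by apply/bigmax_leqP => x _; rewrite -ltnS (leq_ltn_trans (leq_subr _ _)). Qed.

Lemma surplus_attained u : exists2 x, in_range u x & surplus u = f x.1 - x.2.
Proof.
have [v [fv_gt0 uv]] := fdom u.
have uv_in : in_range u (v, f v) by apply/asboolP; split.
rewrite /surplus (bigmax_eq_arg _ uv_in).
by case: arg_maxnP => // x ux _; exists x.
Qed.

(* A walk of positive length from u to the broadcaster realising the surplus
   of u would start at a neighbour of strictly larger surplus. *)
Lemma surplus_local_max u :
  (forall w, t u w -> surplus w <= surplus u) -> 0 < f u /\ surplus u = f u.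
Proof.
move=> umax; have [[v n] /asboolP[/= fv_gt0 n_le [p [tp pv p_le]]] su] := surplus_attained u.
case: p tp pv p_le => [_ /= vu _ | w p /= /andP[tuw tp] pv p_le].
  subst v; split=> //; apply/eqP; rewrite eqn_leq {1}su leq_subr /=.
  have uu_in : in_range u (u, ord0) by apply/asboolP; split=> //; exists [::].
  by have := surplus_ge uu_in; rewrite subn0.
have n1_lt : n.-1 < k.+1 by rewrite ltnS (leq_trans (leq_pred n)) // -ltnS.
have wv_in : in_range w (v, inord n.-1).
  apply/asboolP; rewrite /= inordK //.
  by split=> //; [apply: leq_trans (leq_pred n) n_le | exists p; split=> //; lia].
have := surplus_ge wv_in; rewrite /= inordK //.
by have := umax w tuw; lia.
Qed.

Definition parent u : V :=
  if [pick w | t u w && (surplus u < surplus w)] is Some w then w else u.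

Lemma parent_up u : parent u != u -> t u (parent u) /\ surplus u < surplus (parent u).
Proof. by rewrite /parent; case: pickP => [w /andP[]|_]; rewrite ?eqxx. Qed.

Lemma parent_root u : parent u = u -> forall w, t u w -> surplus w <= surplus u.
Proof.
rewrite /parent; case: pickP => [w /andP[_ lt] wu | none _ w tuw].
  by rewrite wu ltnn in lt.
by have := none w; rewrite tuw /= => /negbT; rewrite -leqNgt.
Qed.

Definition surplus_forest : rel V :=
  fun u w => (u != w) && ((w == parent u) || (u == parent w)).

Lemma surplus_forest_sym : symmetric surplus_forest.
Proof. by move=> u w; rewrite /surplus_forest eq_sym orbC. Qed.

Lemma surplus_forest_sub : subrel surplus_forest t.
Proof.
move=> u w /andP[uw /orP[] /eqP E].
  have pu : parent u != u by rewrite -E eq_sym.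
  by rewrite E; case: (parent_up pu).
have pw : parent w != w by rewrite -E.
by rewrite tsym E; case: (parent_up pw).
Qed.

Lemma surplus_forest_up y a : surplus_forest y a -> surplus y <= surplus a -> a = parent y.
Proof.
case/andP=> ya /orP[/eqP // | /eqP yE le].
have pa : parent a != a by rewrite -yE.
by have [_] := parent_up pa; rewrite -yE ltnNge le.
Qed.

Lemma surplus_forest_parent u : parent u != u -> surplus_forest u (parent u).
Proof. by move=> pu; rewrite /surplus_forest eq_sym pu eqxx. Qed.

Lemma surplus_forest_reaches_source u :
  exists r, [/\ 0 < f r, surplus u <= f r & within surplus_forest u r (f r - surplus u)].
Proof.
have [n] := ubnP (k - surplus u); elim: n u => // n IH u /ltnSE u_le.
have [pu | pu] := eqVneq (parent u) u.
  have [fu_gt0 ->] := surplus_local_max (parent_root pu).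
  by exists u; split=> //; exists [::]; rewrite subnn.
have [_ lt] := parent_up pu.
have [|r [fr_gt0 pr [p [fp pE p_le]]]] := IH (parent u).
  by have := surplus_le (parent u); lia.
exists r; split=> //; first lia.
exists (parent u :: p); split=> /=; [by rewrite surplus_forest_parent | by [] | lia].
Qed.

Lemma dom_broadcast_surplus_forest : dom_broadcast surplus_forest f.
Proof.
move=> u; have [r [fr_gt0 _ ur]] := surplus_forest_reaches_source u.
by exists r; split; last exact: within_leq (leq_subr _ _) ur.
Qed.

End SurplusForest.

Lemma spanning_tree_dominated (V : finType) (e : rel V) k (f : {ffun V -> 'I_k.+1}) :
  simple_graph e -> connected e -> dom_broadcast e f ->
  exists T, spanning_tree e T /\ dom_broadcast T f.
Proof.
move=> simple conn fdom; apply: spanning_tree_by_deletion => // t tsym _ _ tdom cyc.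
have [y [z [tyz Fyz yz]]] := exists_cycle_edge_outside tsym (@surplus_forest_up _ _ t f) cyc.
exists y, z; split=> //; apply: dom_broadcast_sub (dom_broadcast_surplus_forest tdom).
apply: subrel_del_edge => //; first exact: surplus_forest_sub.
by rewrite surplus_forest_sym.
Qed.

Section BroadcastNumber.
Import Order.TTheory.
Variables (V : finType) (k : nat).
Implicit Types (e : rel V) (f : {ffun V -> 'I_k.+1}).

Lemma cost_le f : cost f <= #|V| * k.
Proof.
rewrite /cost -sum_nat_const; apply: leq_sum => u _.
by rewrite -ltnS.
Qed.

Lemma gammaB_le_cost e f : dom_broadcast e f -> gammaB e k <= cost f.
Proof.
move=> fdom; rewrite /gammaB -minEnat.
by apply: (@bigmin_le_cond _ nat); apply/asboolP.
Qed.

Lemma gammaB_attained e :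
  0 < k -> exists2 f : {ffun V -> 'I_k.+1}, dom_broadcast e f & gammaB e k = cost f.
Proof.
move=> k_gt0; pose one : {ffun V -> 'I_k.+1} := [ffun=> inord 1].
have one_dom : `[< dom_broadcast e one >].
  by apply/asboolP => u; exists u; rewrite ffunE inordK //; split=> //; exists [::].
rewrite /gammaB -minEnat (@bigmin_eq_arg _ nat _ _ one _ (@cost V k) one_dom).
  by case: arg_minP => // g /asboolP gdom _; exists g.
by move=> g _; exact: cost_le.
Qed.

End BroadcastNumber.

Theorem theorem2 (V : finType) (e : rel V) (k : nat) :
  simple_graph e -> connected e -> 3 <= k ->
  (exists t : rel V, spanning_tree e t /\ gammaB t k = gammaB e k) /\
  (forall t : rel V, spanning_tree e t -> gammaB e k <= gammaB t k).
Proof.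
move=> simple conn k_ge3; have k_gt0 : 0 < k by apply: leq_trans k_ge3.
have tree_ge t : spanning_tree e t -> gammaB e k <= gammaB t k.
  move=> [_ te]; have [g gdom ->] := gammaB_attained t k_gt0.
  exact/gammaB_le_cost/(dom_broadcast_sub te).
split=> //.
have [f fdom opt] := gammaB_attained e k_gt0.
have [T [eT Tdom]] := spanning_tree_dominated simple conn fdom.
exists T; split=> //; apply/eqP; rewrite eqn_leq tree_ge // andbT opt.
exact: gammaB_le_cost.
Qed.
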